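(* Let $\alpha\in\mathbb R$ and let $(\mathfrak g_1,\varphi_1,\xi_1,\eta_1,g_1)$ and $(\mathfrak g_2,\varphi_2,\xi_2,\eta_2,g_2)$ be two almost $\alpha$-coK\''ahler Lie algebras with $\mathcal L_{\xi_i}\varphi_i=0$ for $i=1,2$ (in particular, two $K$-cosymplectic Lie algebras). For $i=1,2$ let $\mathfrak h_i=\ker\eta_i$, $J_i=\varphi_i|_{\mathfrak h_i}$, $h_i=g_i|_{\mathfrak h_i\times\mathfrak h_i}$ and $D_i=\mathrm{ad}_{\xi_i}|_{\mathfrak h_i}$. Then $\mathfrak g_1$ and $\mathfrak g_2$ are isomorphic (as almost $\alpha$-coK\''ahler Lie algebras) if and only if there exists an isomorphism $\psi:(\mathfrak h_1,J_1,h_1)\to(\mathfrak h_2,J_2,h_2)$ of almost K\''ahler Lie algebras such that $\psi\circ D_1=D_2\circ\psi$.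
   Context: For a Lie algebra, $d\eta(x,y)=-\eta([x,y])$ and $d\omega(x,y,z)=-\omega([x,y],z)-\omega([y,z],x)-\omega([z,x],y)$. An almost contact metric structure on a $(2n+1)$-dimensional Lie algebra $\mathfrak g$ is $(\varphi,\xi,\eta,g)$ with $\eta(\xi)=1$, $\varphi^2=-I+\eta\otimes\xi$, $\eta\circ\varphi=0$, $g$ positive definite with $g(\varphi x,\varphi y)=g(x,y)-\eta(x)\eta(y)$; $\Phi(x,y)=g(x,\varphi y)$. It is almost $\alpha$-coK\''ahler if $\eta\wedge\Phi^n\neq0$, $d\eta=0$, $d\Phi=2\alpha\,\eta\wedge\Phi$; for $\alpha=0$ it is almost coK\''ahler, and $K$-cosymplectic if moreover $\xi$ is Killing. $\mathcal L_\xi\varphi=\mathrm{ad}_\xi\circ\varphi-\varphi\circ\mathrm{ad}_\xi$. An almost K\''ahler structure on a $2n$-dimensional Lie algebra is $(J,h)$, $J^2=-I$, $h$ positive definite, $h(Jx,Jy)=h(x,y)$, $h(x,Jy)$ closed and nondegenerate. Isomorphism of almost $\alpha$-coK\''ahler Lie algebras: Lie algebra isomorphism $\Psi$ with $\Psi\circ\varphi_1=\varphi_2\circ\Psi$, $\eta_2\circ\Psi=\eta_1$, $\Psi\xi_1=\xi_2$, $\Psi^*g_2=g_1$. Isomorphism of almost K\''ahler Lie algebras: Lie algebra isomorphism $\psi$ with $\psi\circ J_1=J_2\circ\psi$, $\psi^*h_2=h_1$. *)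

From HB Require Import structures.
From mathcomp Require Import all_boot all_order all_algebra all_fingroup.
From mathcomp Require Import reals.
Set Implicit Arguments. Unset Strict Implicit. Unset Printing Implicit Defensive.
Import Order.TTheory GRing.Theory Num.Theory.
Local Open Scope ring_scope.

Section Defs.
Variable R : realType.

Definition linear_fun (V W : lmodType R) (f : V -> W) : Prop :=
  forall (a : R) (x y : V), f (a *: x + y) = a *: f x + f y.

Definition bilinear_fun (V W : lmodType R) (b : V -> V -> W) : Prop :=
  (forall y, linear_fun (fun x => b x y)) /\ (forall x, linear_fun (b x)).

Definition is_lie_bracket (V : lmodType R) (br : V -> V -> V) : Prop :=
  ((bilinear_fun br) /\
     ((forall x, br x x = 0)) /\
     ((forall x y z, br x (br y z) + br y (br z x) + br z (br x y) = 0))).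

Definition almost_contact_metric (V : lmodType R)
  (phi : V -> V) (xi : V) (eta : V -> R) (g : V -> V -> R) : Prop :=
  ((linear_fun phi) /\
     (linear_fun (eta : V -> R^o)) /\
     (bilinear_fun (g : V -> V -> R^o)) /\
     (eta xi = 1) /\
     ((forall x, phi (phi x) = - x + eta x *: xi)) /\
     ((forall x, eta (phi x) = 0)) /\
     ((forall x y, g x y = g y x)) /\
     ((forall x, x != 0 -> 0 < g x x)) /\
     ((forall x y, g (phi x) (phi y) = g x y - eta x * eta y))).

Definition fund_form (V : lmodType R) (phi : V -> V) (g : V -> V -> R) :=
  fun x y => g x (phi y).

(* (eta /\ Phi^n)(v_0,...,v_{2n}), up to a nonzero normalising constant *)
Definition eta_wedge_Phi_n (V : lmodType R) (n : nat) (eta : V -> R)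
  (Phi : V -> V -> R) (v : 'I_(2 * n).+1 -> V) : R :=
  \sum_(s : 'S_(2 * n).+1)
     (-1) ^+ (odd_perm s) * eta (v (s ord0)) *
     \prod_(k < n) Phi (v (s (inord (2 * k).+1))) (v (s (inord (2 * k).+2))).

Definition eta_wedge_Phi_n_nonzero (V : lmodType R) (n : nat) (eta : V -> R)
  (Phi : V -> V -> R) : Prop :=
  exists v : 'I_(2 * n).+1 -> V, eta_wedge_Phi_n eta Phi v != 0.

Definition d1 (V : lmodType R) (br : V -> V -> V) (eta : V -> R) :=
  fun x y => - eta (br x y).

Definition d2 (V : lmodType R) (br : V -> V -> V) (om : V -> V -> R) :=
  fun x y z => - om (br x y) z - om (br y z) x - om (br z x) y.

Definition wedge12 (V : lmodType R) (eta : V -> R) (om : V -> V -> R) :=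
  fun x y z => eta x * om y z + eta y * om z x + eta z * om x y.

Definition almost_alpha_coKahler (alpha : R) (n : nat) (V : vectType R)
  (br : V -> V -> V) (phi : V -> V) (xi : V) (eta : V -> R) (g : V -> V -> R)
  : Prop :=
  ((\dim (fullv : {vspace V}) = (2 * n).+1) /\
     (is_lie_bracket br) /\
     (almost_contact_metric phi xi eta g) /\
     (eta_wedge_Phi_n_nonzero n eta (fund_form phi g)) /\
     ((forall x y, d1 br eta x y = 0)) /\
     ((forall x y z, d2 br (fund_form phi g) x y z =
                     2 * alpha * wedge12 eta (fund_form phi g) x y z))).

Definition lie_deriv_xi_phi_zero (V : lmodType R) (br : V -> V -> V)
  (phi : V -> V) (xi : V) : Prop :=
  forall x, br xi (phi x) - phi (br xi x) = 0.

Definition coKahler_iso (V1 V2 : lmodType R)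
  (br1 : V1 -> V1 -> V1) (phi1 : V1 -> V1) (xi1 : V1) (eta1 : V1 -> R) (g1 : V1 -> V1 -> R)
  (br2 : V2 -> V2 -> V2) (phi2 : V2 -> V2) (xi2 : V2) (eta2 : V2 -> R) (g2 : V2 -> V2 -> R)
  (Psi : V1 -> V2) : Prop :=
  ((linear_fun Psi) /\
     (bijective Psi) /\
     ((forall x y, Psi (br1 x y) = br2 (Psi x) (Psi y))) /\
     ((forall x, Psi (phi1 x) = phi2 (Psi x))) /\
     ((forall x, eta2 (Psi x) = eta1 x)) /\
     (Psi xi1 = xi2) /\
     ((forall x y, g2 (Psi x) (Psi y) = g1 x y))).

(* psi is an isomorphism of almost Kahler Lie algebras
   (h1 = ker eta1, J1 = phi1|h1, h1 = g1|h1) -> (h2 = ker eta2, J2, h2),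
   represented by a map V1 -> V2 whose values outside ker eta1 are irrelevant *)
Definition aKahler_iso_on_kernels (V1 V2 : lmodType R)
  (br1 : V1 -> V1 -> V1) (phi1 : V1 -> V1) (eta1 : V1 -> R) (g1 : V1 -> V1 -> R)
  (br2 : V2 -> V2 -> V2) (phi2 : V2 -> V2) (eta2 : V2 -> R) (g2 : V2 -> V2 -> R)
  (psi : V1 -> V2) : Prop :=
  ((
      (forall x, eta1 x = 0 -> eta2 (psi x) = 0)) /\
     ((forall a x y, eta1 x = 0 -> eta1 y = 0 -> psi (a *: x + y) = a *: psi x + psi y)) /\
     (
      (forall x y, eta1 x = 0 -> eta1 y = 0 -> psi x = psi y -> x = y)) /\
     ((forall y, eta2 y = 0 -> exists2 x, eta1 x = 0 & psi x = y)) /\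
     (
      (forall x y, eta1 x = 0 -> eta1 y = 0 -> psi (br1 x y) = br2 (psi x) (psi y))) /\
     (
      (forall x, eta1 x = 0 -> psi (phi1 x) = phi2 (psi x))) /\
     (
      (forall x y, eta1 x = 0 -> eta1 y = 0 -> g2 (psi x) (psi y) = g1 x y))).

End Defs.

(** Since [d eta = 0], the bracket takes values in [ker eta], and the algebra
    splits as [ker eta (+) R xi] with [xi] a unit vector orthogonal to [ker eta]
    and killed by [phi]. By bilinearity
    [[h + a xi, k + c xi] = [h, k] + a D k - c D h] with [D = ad_xi], so the whole
    structure is determined by its restriction to [ker eta] together with [D]:
    an isomorphism restricts to the kernels, and conversely an isomorphism [psi]
    of the kernels intertwining the [D_i] extends linearly by [xi_1 |-> xi_2]. *)
From HB Require Import structures.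
From mathcomp Require Import all_boot all_order all_algebra all_fingroup.
From mathcomp Require Import reals.
From Stdlib Require Import ClassicalEpsilon.
Import GRing.Theory Num.Theory.
Local Open Scope ring_scope.

Lemma injective_surjective_bijective {A B : Type} (f : A -> B) :
  injective f -> (forall y, exists x, f x = y) -> bijective f.
Proof.
move=> f_inj f_surj.
pose g y := proj1_sig (constructive_indefinite_description _ (f_surj y)).
have fgK : cancel g f by move=> y; rewrite /g; case: constructive_indefinite_description.
by exists g => // x; apply: f_inj; rewrite fgK.
Qed.

Section LinearFun.
Context {R : realType} {V W : lmodType R} {f : V -> W}.
Hypothesis f_lin : linear_fun f.

Lemma linear_fun0 : f 0 = 0.
Proof.
have := f_lin 1 0 0; rewrite !scale1r addr0 => f00.
by apply: (addrI (f 0)); rewrite addr0 -f00.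
Qed.

Lemma linear_funD x y : f (x + y) = f x + f y.
Proof. by have := f_lin 1 x y; rewrite !scale1r. Qed.

Lemma linear_funZ a x : f (a *: x) = a *: f x.
Proof. by have := f_lin a x 0; rewrite !addr0 linear_fun0 addr0. Qed.

Lemma linear_funB x y : f (x - y) = f x - f y.
Proof. by rewrite linear_funD -scaleN1r linear_funZ scaleN1r. Qed.

End LinearFun.

Section BilinearFun.
Context {R : realType} {V W : lmodType R} {b : V -> V -> W}.
Hypothesis b_bil : bilinear_fun b.

Lemma bilinear_fun0l z : b 0 z = 0. Proof. exact (linear_fun0 (proj1 b_bil z)). Qed.
Lemma bilinear_funDl x y z : b (x + y) z = b x z + b y z.
Proof. exact (linear_funD (proj1 b_bil z) x y). Qed.
Lemma bilinear_funDr x y z : b z (x + y) = b z x + b z y.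
Proof. exact (linear_funD (proj2 b_bil z) x y). Qed.
Lemma bilinear_funZl a x z : b (a *: x) z = a *: b x z.
Proof. exact (linear_funZ (proj1 b_bil z) a x). Qed.
Lemma bilinear_funZr a x z : b z (a *: x) = a *: b z x.
Proof. exact (linear_funZ (proj2 b_bil z) a x). Qed.

Hypothesis b_alt : forall x, b x x = 0.

Lemma alternating_anticomm x y : b x y = - b y x.
Proof.
apply/eqP; rewrite -addr_eq0; apply/eqP.
have := b_alt (x + y).
by rewrite bilinear_funDl !bilinear_funDr !b_alt add0r addr0 addrC.
Qed.

Lemma alternating_decomp (xi h k : V) (a c : R) :
  b (h + a *: xi) (k + c *: xi) = b h k + (a *: b xi k - c *: b xi h).
Proof.
rewrite bilinear_funDl !bilinear_funDr !bilinear_funZl !bilinear_funZr.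
rewrite b_alt !scaler0 addr0 (alternating_anticomm h xi) scalerN.
by rewrite -!addrA; congr (_ + _); rewrite addrC.
Qed.

End BilinearFun.

Section KernelDecomposition.
Context {R : realType} {V : lmodType R} {eta : V -> R} {xi : V}.
Hypotheses (eta_lin : linear_fun (eta : V -> R^o)) (eta_xi : eta xi = 1).

Lemma linear_formZ a x : eta (a *: x) = a * eta x.
Proof. exact (linear_funZ eta_lin a x). Qed.

Lemma ker_formB x y : eta x = 0 -> eta y = 0 -> eta (x - y) = 0.
Proof. by move=> ex ey; rewrite (linear_funB eta_lin) ex ey subr0. Qed.

Lemma ker_formZ a x : eta x = 0 -> eta (a *: x) = 0.
Proof. by move=> ex; rewrite linear_formZ ex mulr0. Qed.

Lemma form_decomp h a : eta h = 0 -> eta (h + a *: xi) = a.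
Proof.
by move=> eh; rewrite (linear_funD eta_lin) linear_formZ eh eta_xi mulr1 add0r.
Qed.

Lemma ker_form_proj x : eta (x - eta x *: xi) = 0.
Proof. by rewrite (linear_funB eta_lin) linear_formZ eta_xi mulr1 subrr. Qed.

Lemma ker_form_ind (P : V -> Prop) :
  (forall h a, eta h = 0 -> P (h + a *: xi)) -> forall x, P x.
Proof. by move=> HP x; have := HP _ (eta x) (ker_form_proj x); rewrite subrK. Qed.

End KernelDecomposition.

Section AlmostContactMetric.
Context {R : realType} {V : lmodType R} {phi : V -> V} {xi : V} {eta : V -> R}
  {g : V -> V -> R}.
Hypothesis acm : almost_contact_metric phi xi eta g.

Lemma acm_linear_phi : linear_fun phi. Proof. by case: acm. Qed.
Lemma acm_linear_eta : linear_fun (eta : V -> R^o). Proof. by case: acm => _ []. Qed.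
Lemma acm_eta_xi : eta xi = 1. Proof. by case: acm => _ [_ [_ []]]. Qed.

Lemma acm_phi_xi : phi xi = 0.
Proof.
case: acm => _ [_ [g_bil [exi [phi2 [eta_phi [_ [g_pos g_phi]]]]]]].
have g_phi_xi : g (phi xi) (phi xi) = 0.
  have := g_phi (phi xi) (phi xi).
  by rewrite phi2 exi scale1r addNr eta_phi mulr0 subr0 (bilinear_fun0l g_bil).
by apply/eqP; apply: contraT => /g_pos; rewrite g_phi_xi Order.POrderTheory.ltxx.
Qed.

Lemma acm_g_xi y : g xi y = eta y.
Proof.
case: acm => _ [_ [g_bil [exi [_ [_ [_ [_ g_phi]]]]]]].
have := g_phi xi y; rewrite acm_phi_xi exi mul1r (bilinear_fun0l g_bil).
by move/eqP; rewrite eq_sym subr_eq0 => /eqP.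
Qed.

Lemma acm_g_decomp h k a c : eta h = 0 -> eta k = 0 ->
  g (h + a *: xi) (k + c *: xi) = g h k + a * c.
Proof.
case: acm => _ [_ [g_bil [exi [_ [_ [g_sym _]]]]]] eh ek.
rewrite (bilinear_funDl g_bil) !(bilinear_funDr g_bil).
rewrite !(bilinear_funZl g_bil) !(bilinear_funZr g_bil) /=.
rewrite (g_sym h xi) !acm_g_xi eh ek exi !scaler0 add0r !addr0.
by congr (_ + _); exact: (congr1 (GRing.mul a) (mulr1 c)).
Qed.

Lemma acm_phi_decomp h a : phi (h + a *: xi) = phi h.
Proof.
by rewrite (linear_funD acm_linear_phi) (linear_funZ acm_linear_phi) acm_phi_xi
  scaler0 addr0.
Qed.

End AlmostContactMetric.

Section Restriction.
Context {R : realType} {V1 V2 : lmodType R}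
  {br1 : V1 -> V1 -> V1} {phi1 : V1 -> V1} {xi1 : V1} {eta1 : V1 -> R}
  {g1 : V1 -> V1 -> R}
  {br2 : V2 -> V2 -> V2} {phi2 : V2 -> V2} {xi2 : V2} {eta2 : V2 -> R}
  {g2 : V2 -> V2 -> R} {Psi : V1 -> V2}.

Lemma coKahler_iso_restrict :
  coKahler_iso br1 phi1 xi1 eta1 g1 br2 phi2 xi2 eta2 g2 Psi ->
  aKahler_iso_on_kernels br1 phi1 eta1 g1 br2 phi2 eta2 g2 Psi /\
  (forall x, eta1 x = 0 -> Psi (br1 xi1 x) = br2 xi2 (Psi x)).
Proof.
move=> [Psi_lin [[Psi_inv PsiK PsiVK] [Psi_br [Psi_phi [Psi_eta [Psi_xi Psi_g]]]]]].
split; last by move=> x _; rewrite Psi_br Psi_xi.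
split; first by move=> x ex; rewrite Psi_eta.
split; first by move=> a x y _ _; exact: Psi_lin.
split; first by move=> x y _ _ /(can_inj PsiK).
split; first by move=> y ey; exists (Psi_inv y); rewrite -?Psi_eta PsiVK.
split; first by move=> x y _ _; exact: Psi_br.
split; first by move=> x _; exact: Psi_phi.
by move=> x y _ _; exact: Psi_g.
Qed.

End Restriction.

Section Extension.
Context {R : realType} {V1 V2 : lmodType R}
  {br1 : V1 -> V1 -> V1} {phi1 : V1 -> V1} {xi1 : V1} {eta1 : V1 -> R}
  {g1 : V1 -> V1 -> R}
  {br2 : V2 -> V2 -> V2} {phi2 : V2 -> V2} {xi2 : V2} {eta2 : V2 -> R}
  {g2 : V2 -> V2 -> R} {psi : V1 -> V2}.
Hypotheses (acm1 : almost_contact_metric phi1 xi1 eta1 g1)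
  (acm2 : almost_contact_metric phi2 xi2 eta2 g2).
Hypotheses (br1_bil : bilinear_fun br1) (br1_alt : forall x, br1 x x = 0)
  (br2_bil : bilinear_fun br2) (br2_alt : forall x, br2 x x = 0).
Hypothesis br1_ker : forall x y, eta1 (br1 x y) = 0.
Hypotheses (psi_iso : aKahler_iso_on_kernels br1 phi1 eta1 g1 br2 phi2 eta2 g2 psi)
  (psi_D : forall x, eta1 x = 0 -> psi (br1 xi1 x) = br2 xi2 (psi x)).

Let eta1_lin := acm_linear_eta acm1.
Let eta2_lin := acm_linear_eta acm2.
Let eta1_xi1 := acm_eta_xi acm1.
Let eta2_xi2 := acm_eta_xi acm2.

Let psi_ker x : eta1 x = 0 -> eta2 (psi x) = 0.
Proof. by case: psi_iso => ker _; apply: ker. Qed.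

Let psi_lin a x y : eta1 x = 0 -> eta1 y = 0 -> psi (a *: x + y) = a *: psi x + psi y.
Proof. by case: psi_iso => _ [lin _]; apply: lin. Qed.

Let eta1_0 : eta1 0 = 0 := linear_fun0 eta1_lin.

Let psi0 : psi 0 = 0.
Proof.
have := @psi_lin 1 0 0 eta1_0 eta1_0; rewrite !scale1r addr0 => psi00.
by apply: (addrI (psi 0)); rewrite addr0 -psi00.
Qed.

Let psiD x y : eta1 x = 0 -> eta1 y = 0 -> psi (x + y) = psi x + psi y.
Proof. by move=> ex ey; have := @psi_lin 1 x y ex ey; rewrite !scale1r. Qed.

Let psiZ a x : eta1 x = 0 -> psi (a *: x) = a *: psi x.
Proof.
by move=> ex; have := @psi_lin a x 0 ex eta1_0; rewrite !addr0 psi0 addr0.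
Qed.

Let psiB x y : eta1 x = 0 -> eta1 y = 0 -> psi (x - y) = psi x - psi y.
Proof.
move=> ex ey; rewrite -scaleN1r psiD ?psiZ ?scaleN1r //.
by rewrite -scaleN1r (ker_formZ eta1_lin).
Qed.

Definition extend_by_xi x := psi (x - eta1 x *: xi1) + eta1 x *: xi2.

Lemma extend_by_xiE h a : eta1 h = 0 -> extend_by_xi (h + a *: xi1) = psi h + a *: xi2.
Proof. by move=> eh; rewrite /extend_by_xi (form_decomp eta1_lin eta1_xi1) // addrK. Qed.

Lemma extend_by_xi_ker x : eta1 x = 0 -> extend_by_xi x = psi x.
Proof. by move=> ex; rewrite /extend_by_xi ex !scale0r subr0 addr0. Qed.

Lemma extend_by_xi_eta x : eta2 (extend_by_xi x) = eta1 x.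
Proof.
move: x; apply: (ker_form_ind eta1_lin eta1_xi1) => h a eh.
rewrite extend_by_xiE // (form_decomp eta1_lin eta1_xi1) //.
by rewrite (form_decomp eta2_lin eta2_xi2) // psi_ker.
Qed.

Lemma extend_by_xi_xi : extend_by_xi xi1 = xi2.
Proof.
have := @extend_by_xiE 0 1 eta1_0.
by rewrite !add0r !scale1r psi0 add0r.
Qed.

Lemma extend_by_xi_linear : linear_fun extend_by_xi.
Proof.
move=> a x y; rewrite /extend_by_xi.
have -> : a *: x + y - eta1 (a *: x + y) *: xi1
        = a *: (x - eta1 x *: xi1) + (y - eta1 y *: xi1).
  rewrite (linear_funD eta1_lin) (linear_formZ eta1_lin) scalerDl -scalerA scalerBr.
  by rewrite opprD addrACA.
rewrite psi_lin ?(ker_form_proj eta1_lin eta1_xi1) //.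
rewrite (linear_funD eta1_lin) (linear_formZ eta1_lin) scalerDl -scalerA scalerDr.
by rewrite addrACA.
Qed.

Lemma extend_by_xi_bijective : bijective extend_by_xi.
Proof.
case: psi_iso => _ [_ [psi_inj [psi_surj _]]].
apply: injective_surjective_bijective.
  move=> x y Exy; have Eeta : eta1 x = eta1 y by rewrite -!extend_by_xi_eta Exy.
  have := psi_inj _ _ (ker_form_proj eta1_lin eta1_xi1 x)
    (ker_form_proj eta1_lin eta1_xi1 y).
  rewrite /extend_by_xi Eeta in Exy *.
  by move/(_ (addIr _ Exy))/subIr.
move=> y; have [h eh psi_h] := psi_surj _ (ker_form_proj eta2_lin eta2_xi2 y).
by exists (h + eta2 y *: xi1); rewrite extend_by_xiE // psi_h subrK.
Qed.

Lemma extend_by_xi_bracket x y :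
  extend_by_xi (br1 x y) = br2 (extend_by_xi x) (extend_by_xi y).
Proof.
case: psi_iso => _ [_ [_ [_ [psi_br _]]]].
move: x y; apply: (ker_form_ind eta1_lin eta1_xi1) => h a eh.
apply: (ker_form_ind eta1_lin eta1_xi1) => k c ek.
rewrite !extend_by_xiE // extend_by_xi_ker // (alternating_decomp br1_bil br1_alt).
rewrite (alternating_decomp br2_bil br2_alt) psiD ?psiB ?psiZ ?psi_D ?psi_br //.
all: by do ?apply: (ker_formB eta1_lin); apply: (ker_formZ eta1_lin).
Qed.

Lemma extend_by_xi_phi x : extend_by_xi (phi1 x) = phi2 (extend_by_xi x).
Proof.
case: psi_iso => _ [_ [_ [_ [_ [psi_phi _]]]]].
move: x; apply: (ker_form_ind eta1_lin eta1_xi1) => h a eh.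
have eh' : eta1 (phi1 h) = 0 by case: acm1 => _ [_ [_ [_ [_ []]]]].
by rewrite (acm_phi_decomp acm1) extend_by_xi_ker // extend_by_xiE //
  (acm_phi_decomp acm2) psi_phi.
Qed.

Lemma extend_by_xi_metric x y : g2 (extend_by_xi x) (extend_by_xi y) = g1 x y.
Proof.
case: psi_iso => _ [_ [_ [_ [_ [_ psi_g]]]]].
move: x y; apply: (ker_form_ind eta1_lin eta1_xi1) => h a eh.
apply: (ker_form_ind eta1_lin eta1_xi1) => k c ek.
by rewrite !extend_by_xiE // (acm_g_decomp acm1) // (acm_g_decomp acm2) ?psi_ker ?psi_g.
Qed.

Lemma coKahler_iso_extend :
  coKahler_iso br1 phi1 xi1 eta1 g1 br2 phi2 xi2 eta2 g2 extend_by_xi.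
Proof.
split; first exact: extend_by_xi_linear.
split; first exact: extend_by_xi_bijective.
split; first exact: extend_by_xi_bracket.
split; first exact: extend_by_xi_phi.
split; first exact: extend_by_xi_eta.
split; first exact: extend_by_xi_xi.
exact: extend_by_xi_metric.
Qed.

End Extension.

Theorem mainTheorem11 (R : realType) (alpha : R)
  (n1 : nat) (V1 : vectType R) (br1 : V1 -> V1 -> V1) (phi1 : V1 -> V1) (xi1 : V1)
  (eta1 : V1 -> R) (g1 : V1 -> V1 -> R)
  (n2 : nat) (V2 : vectType R) (br2 : V2 -> V2 -> V2) (phi2 : V2 -> V2) (xi2 : V2)
  (eta2 : V2 -> R) (g2 : V2 -> V2 -> R) :
  almost_alpha_coKahler alpha n1 br1 phi1 xi1 eta1 g1 ->
  almost_alpha_coKahler alpha n2 br2 phi2 xi2 eta2 g2 ->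
  lie_deriv_xi_phi_zero br1 phi1 xi1 ->
  lie_deriv_xi_phi_zero br2 phi2 xi2 ->
  (exists Psi : V1 -> V2,
     coKahler_iso br1 phi1 xi1 eta1 g1 br2 phi2 xi2 eta2 g2 Psi) <->
  (exists psi : V1 -> V2,
     aKahler_iso_on_kernels br1 phi1 eta1 g1 br2 phi2 eta2 g2 psi /\
     (* psi o D1 = D2 o psi on h1, with D_i = ad_{xi_i} restricted to h_i *)
     (forall x, eta1 x = 0 -> psi (br1 xi1 x) = br2 xi2 (psi x))).
Proof.
move=> [_ [[br1_bil [br1_alt _]] [acm1 [_ [d_eta1 _]]]]].
move=> [_ [[br2_bil [br2_alt _]] [acm2 _]]] _ _.
have br1_ker x y : eta1 (br1 x y) = 0.
  by apply/eqP; rewrite -oppr_eq0; apply/eqP; exact: d_eta1.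
split=> [[Psi /coKahler_iso_restrict iso] | [psi [psi_iso psi_D]]]; first by exists Psi.
eexists; exact: (coKahler_iso_extend acm1 acm2 br1_bil br1_alt br2_bil br2_alt br1_ker
  psi_iso psi_D).
Qed.
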